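(* In the online ADDIS setting of the context, assume the $p$-values $P_1,P_2,\dots$ are independent, let $T\in\mathbb N$ and let $g:\{0,1\}^T\to\mathbb R$ be coordinatewise nondecreasing. Assume $\alpha_t$, $\lambda_t$ and $1-\tau_t$ are monotonic functions of the past for all $t$, and $\alpha_t\le\lambda_t<\tau_t$ for all $t$. Then for any $t\le T$ with $t\in\mathcal H_0$ whose null $p$-value is conditionally uniformly conservative, $$\mathbb E\Big[\frac{\alpha_t\mathbf 1\{\lambda_t<P_t\le\tau_t\}}{(\tau_t-\lambda_t)(g(R_{1:T})\vee1)}\,\Big|\,\mathcal F^{t-1},S_t=1\Big]\ \ge\ \mathbb E\Big[\frac{\alpha_t}{\tau_t(g(R_{1:T})\vee1)}\,\Big|\,\mathcal F^{t-1},S_t=1\Big]\ \ge\ \mathbb E\Big[\frac{\mathbf 1\{P_t\le\alpha_t\}}{g(R_{1:T})\vee1}\,\Big|\,\mathcal F^{t-1},S_t=1\Big].$$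
   Context: Let $P_1,P_2,\dots$ be $p$-values, $\mathcal H_0\subseteq\mathbb N$ the set of true null indices. Sequences $\{\alpha_j\},\{\lambda_j\},\{\tau_j\}$ in $[0,1]$ define $S_j=\mathbf 1\{P_j\le\tau_j\}$, $C_j=\mathbf 1\{P_j\le\lambda_j\}$, $R_j=\mathbf 1\{P_j\le\alpha_j\}$; $R_{1:T}=(R_1,\dots,R_T)$; $\mathcal F^t=\sigma(R_{1:t},C_{1:t},S_{1:t})$, $\mathcal F^0$ trivial; $\alpha_t,\lambda_t,\tau_t$ are deterministic functions of $(R_{1:t-1},C_{1:t-1},S_{1:t-1})$. Such a function is a monotonic function of the past if it is coordinatewise nondecreasing in each $R_i$ and $C_i$ and coordinatewise nonincreasing in each $S_i$. The null $p$-value $P_t$ is conditionally uniformly conservative if for all $x,\tau\in(0,1)$, $\Pr(P_t/\tau\le x\mid P_t\le\tau,\mathcal F^{t-1})\le x$. *)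

From HB Require Import structures.
From mathcomp Require Import all_boot all_order all_algebra.
From mathcomp Require Import all_classical all_reals all_analysis.
Set Implicit Arguments. Unset Strict Implicit. Unset Printing Implicit Defensive.
Import Order.TTheory GRing.Theory Num.Theory.
Local Open Scope classical_set_scope.
Local Open Scope ring_scope.

(* Indices are 0-based: the paper's P_1, P_2, ... are p 0, p 1, ... *)

(* A history (R_i, C_i, S_i)_{i < t} is a list of triples of booleans,
   in the order (R_i, C_i, S_i). *)
Definition history := seq (bool * bool * bool).

(* Given the deterministic rules alpha, lambda, tau (functions of the past;
   time t is the length of the history) and realized p-values p,
   hist t = (R_i, C_i, S_i)_{i < t}. *)
Fixpoint hist {R : realType} (alpha lambda tau : history -> R)
    (p : nat -> R) (t : nat) : history :=
  match t with
  | 0 => [::]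
  | t'.+1 =>
      let h := hist alpha lambda tau p t' in
      rcons h ((p t' <= alpha h), (p t' <= lambda h), (p t' <= tau h))
  end.

Definition Rdec {R : realType} (alpha lambda tau : history -> R)
    (p : nat -> R) (t : nat) : bool :=
  p t <= alpha (hist alpha lambda tau p t).

Definition Rvec {R : realType} (alpha lambda tau : history -> R)
    (p : nat -> R) (T : nat) : {ffun 'I_T -> bool} :=
  [ffun i : 'I_T => Rdec alpha lambda tau p i].

Definition hist_le (h h' : history) : Prop :=
  size h = size h' /\
  forall i, (i < size h)%N ->
    let: (r, c, s) := nth (false, false, false) h i in
    let: (r', c', s') := nth (false, false, false) h' i in
    [&& r ==> r', c ==> c' & s' ==> s].

Definition monotone_past {R : realType} (f : history -> R) : Prop :=
  forall h h', hist_le h h' -> f h <= f h'.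

Definition coord_nondecr {R : realType} (T : nat)
    (g : {ffun 'I_T -> bool} -> R) : Prop :=
  forall b b' : {ffun 'I_T -> bool}, (forall i, b i ==> b' i) -> g b <= g b'.

Definition mutually_independent {d : measure_display} {Omega : measurableType d}
    {R : realType} (P : probability Omega R) (X : nat -> Omega -> R) : Prop :=
  forall (I : seq nat), uniq I ->
  forall B : nat -> set R, (forall i, measurable (B i)) ->
  P (\big[setI/setT]_(i <- I) (X i @^-1` B i)) =
  (\prod_(i <- I) P (X i @^-1` B i))%E.

(* elementary conditional expectation E[f | A] of a nonnegative real function
   given an event A with P A > 0 *)
Definition cexp {d : measure_display} {Omega : measurableType d}
    {R : realType} (P : probability Omega R) (A : set Omega)
    (f : Omega -> R) : \bar R :=
  ((\int[P]_(w in A) (f w)%:E) * ((fine (P A))^-1)%:E)%E.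

Definition cprob {d : measure_display} {Omega : measurableType d}
    {R : realType} (P : probability Omega R) (A B : set Omega) : \bar R :=
  (P (A `&` B) * ((fine (P A))^-1)%:E)%E.

(* The event {(R,C,S)_{1:t-1} = h}, an atom of F^{t-1}. *)
Definition hist_event {d : measure_display} {Omega : measurableType d}
    {R : realType} (alpha lambda tau : history -> R)
    (X : nat -> Omega -> R) (t : nat) (h : history) : set Omega :=
  [set w | hist alpha lambda tau (fun i => X i w) t = h].

(* Conditional uniform conservativeness of P_t: for x, tau in (0,1),
   Pr(P_t / tau <= x | P_t <= tau, F^{t-1}) <= x, i.e. on every atom
   {hist_t = h} of F^{t-1} for which the conditioning event has positive
   probability. *)
Definition cond_unif_conservative {d : measure_display} {Omega : measurableType d}
    {R : realType} (P : probability Omega R) (alpha lambda tau : history -> R)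
    (X : nat -> Omega -> R) (t : nat) : Prop :=
  forall x tau0 : R, 0 < x < 1 -> 0 < tau0 < 1 ->
  forall h : history,
    let A := hist_event alpha lambda tau X t h `&` [set w | X t w <= tau0] in
    (0 < P A)%E ->
    (cprob P A [set w | (X t w / tau0 <= x)%R] <= x%:E)%E.

From HB Require Import structures.
From mathcomp Require Import all_boot all_order all_algebra.
From mathcomp Require Import all_classical all_reals all_analysis.
From mathcomp Require Import measurable_realfun lra.
Set Implicit Arguments. Unset Strict Implicit. Unset Printing Implicit Defensive.
Import Order.TTheory GRing.Theory Num.Theory.
Local Open Scope classical_set_scope.
Local Open Scope ring_scope.

(** Fix an atom [E = {(R, C, S)_(<t) = h}] of [F^(t-1)]; on it [alpha_t = a],
    [lambda_t = l] and [tau_t = u] are constants with [a <= l < u], and [S_t = 1] means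
    [P_t <= u].  While [P_t] stays in one of the bands [(-oo, a]], [(a, l]], [(l, u]],
    every decision, hence all of [R_(1:T)], is the one obtained by substituting the
    representative [0], [l] or [u] for [P_t].  After this substitution the weight
    [1 / (g(R_(1:T)) \/ 1)] no longer depends on [P_t], so by independence each of the
    three conditional expectations is a combination of [P(P_t in band) * subst_weight x],
    where [subst_weight x] integrates the weight over [E] with [P_t := x].  Monotonicity
    of the rules and of [g] makes [subst_weight] nondecreasing (a larger [P_t] can only
    withdraw rejections), and conditional uniform conservativeness gives
    [u * P(P_t <= c) <= c * P(P_t <= u)] for [0 <= c <= u].  Both inequalities then
    reduce to elementary inequalities between these finitely many numbers. *)

Lemma hist_le_rcons (h h' : history) r c s r' c' s' :
  hist_le h h' -> [&& r ==> r', c ==> c' & s' ==> s] ->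
  hist_le (rcons h (r, c, s)) (rcons h' (r', c', s')).
Proof.
move=> [eq_size le_hh'] le_last; split; first by rewrite !size_rcons eq_size.
move=> i; rewrite size_rcons ltnS leq_eqVlt => /orP[/eqP ->|lt_i].
  by rewrite !nth_rcons -eq_size !ltnn !eqxx.
by rewrite !nth_rcons -eq_size lt_i; apply: le_hh'.
Qed.

Arguments hist : simpl never.

Section History.
Variables (R : realType) (alpha lambda tau : history -> R).
Local Notation hist := (hist alpha lambda tau).

Definition decisions (x : R) (h : history) : bool * bool * bool :=
  (x <= alpha h, x <= lambda h, x <= tau h).

Lemma histS p n : hist p n.+1 = rcons (hist p n) (decisions (p n) (hist p n)).
Proof. by []. Qed.

Lemma size_hist p n : size (hist p n) = n.
Proof. by elim: n => [//|n IHn]; rewrite histS size_rcons IHn. Qed.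

Lemma eq_hist p p' n : (forall i, (i < n)%N -> p i = p' i) -> hist p n = hist p' n.
Proof.
elim: n => [//|n IHn] eq_pp'.
by rewrite !histS IHn ?eq_pp' // => i /ltnW; apply: eq_pp'.
Qed.

Lemma take_hist p m n : (m <= n)%N -> take m (hist p n) = hist p m.
Proof.
elim: n => [|n IHn]; first by rewrite leqn0 => /eqP ->.
rewrite leq_eqVlt => /orP[/eqP ->|]; first by rewrite take_oversize // size_hist.
rewrite ltnS leq_eqVlt histS -cats1 take_cat size_hist => /orP[/eqP ->|lt_mn].
  by rewrite ltnn subnn take0 cats0.
by rewrite lt_mn IHn // ltnW.
Qed.

Lemma nth_hist p n i x0 : (i < n)%N ->
  nth x0 (hist p n) i = decisions (p i) (hist p i).
Proof.
elim: n => [//|n IHn]; rewrite ltnS leq_eqVlt histS nth_rcons size_hist.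
by case/orP=> [/eqP ->|lt_in]; rewrite ?ltnn ?eqxx // lt_in IHn.
Qed.

Lemma Rvec_hist p T :
  Rvec alpha lambda tau p T = [ffun i : 'I_T => (nth (false, false, false) (hist p T) i).1.1].
Proof. by apply/ffunP => i; rewrite !ffunE nth_hist. Qed.

Lemma eq_hist_decisions p p' t n :
  (forall i, i != t -> p i = p' i) ->
  decisions (p t) (hist p t) = decisions (p' t) (hist p t) ->
  hist p n = hist p' n.
Proof.
move=> eq_pp' eq_t; elim: n => [//|n IHn]; rewrite !histS -IHn.
by case: (eqVneq n t) => [->|/eq_pp' ->]; rewrite ?eq_t.
Qed.

Hypotheses (mono_alpha : monotone_past alpha) (mono_lambda : monotone_past lambda)
  (mono_tau : monotone_past (fun h => 1 - tau h)).

Lemma hist_le_lower_pvalue p p' t n :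
  (forall i, i != t -> p i = p' i) -> p' t <= p t -> p t <= tau (hist p t) ->
  hist_le (hist p n) (hist p' n).
Proof.
move=> eq_pp' le_t sel_t; elim: n => [|n IHn]; first by split.
rewrite !histS; apply: hist_le_rcons => //.
have le_tau : tau (hist p' n) <= tau (hist p n).
  by move: (mono_tau IHn); rewrite lerD2l lerN2.
have le_n : p' n <= p n by case: (eqVneq n t) => [->|/eq_pp' ->].
apply/and3P; split; apply/implyP => le_p.
- exact: le_trans le_n (le_trans le_p (mono_alpha IHn)).
- exact: le_trans le_n (le_trans le_p (mono_lambda IHn)).
- case: (eqVneq n t) => [-> //|/eq_pp' ->]; exact: le_trans le_p le_tau.
Qed.

Lemma Rvec_le_lower_pvalue p p' t T :
  (forall i, i != t -> p i = p' i) -> p' t <= p t -> p t <= tau (hist p t) ->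
  forall i, Rvec alpha lambda tau p T i ==> Rvec alpha lambda tau p' T i.
Proof.
move=> eq_pp' le_t sel_t i; rewrite !ffunE /Rdec; apply/implyP => le_p.
have le_i : p' i <= p i by case: (eqVneq (i : nat) t) => [->|/eq_pp' ->].
have le_hist := @hist_le_lower_pvalue p p' t i eq_pp' le_t sel_t.
exact: le_trans le_i (le_trans le_p (mono_alpha le_hist)).
Qed.

End History.

Section Cylinder.
Variables (d : measure_display) (Omega : measurableType d) (R : realType).
Variables (X : nat -> Omega -> R) (T : nat).

Definition cylinder (B : nat -> set R) : set Omega :=
  \big[setI/setT]_(i <- iota 0 T) (X i @^-1` B i).

Lemma cylinderP B w : cylinder B w <-> (forall i, (i < T)%N -> B i (X i w)).
Proof.
rewrite /cylinder -bigcap_seq; split=> [cylBw i lt_iT|BXw i /=].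
  by apply: cylBw; rewrite /= mem_iota.
by rewrite mem_iota add0n => /BXw.
Qed.

Lemma measurable_cylinder B : (forall i, measurable_fun setT (X i)) ->
  (forall i, measurable (B i)) -> measurable (cylinder B).
Proof.
move=> mX mB; apply: bigsetI_measurable => i _.
by rewrite -[X i @^-1` _]setTI; apply: mX.
Qed.

Lemma cylinder_setI B n D : (n < T)%N ->
  cylinder (fun i => if i == n then B n `&` D else B i) = cylinder B `&` X n @^-1` D.
Proof.
move=> lt_nT; apply/seteqP; split=> w.
  move/cylinderP => cylw; split; last by have := cylw n lt_nT; rewrite eqxx => -[].
  by apply/cylinderP => i /cylw; case: eqP => [-> []|].
move=> [/cylinderP cylw Dw]; apply/cylinderP => i lt_iT.
by case: eqP => [->|_]; [split; [exact: cylw|] | exact: cylw].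
Qed.

Lemma prob_preimage_setI_cylinder (P : probability Omega R) t B D :
  mutually_independent P X -> (t < T)%N ->
  (forall i, measurable (B i)) -> B t = setT \/ B t = set0 -> measurable D ->
  P (cylinder B `&` X t @^-1` D) = (P (X t @^-1` D) * P (cylinder B))%E.
Proof.
move=> indepX lt_tT mB Bt mD; rewrite -cylinder_setI //.
have mBD i : measurable (if i == t then B t `&` D else B i).
  by case: eqP => _; [exact: measurableI|].
have t_in : t \in iota 0 T by rewrite mem_iota.
rewrite /cylinder !indepX ?iota_uniq //.
rewrite !(bigD1_seq t t_in (iota_uniq 0 T)) /= eqxx.
rewrite (eq_bigr (fun i => P (X i @^-1` B i))) => [|i /negbTE -> //].
case: Bt => ->; first by rewrite setTI preimage_setT probability_setT mul1e.
by rewrite set0I preimage_set0 measure0 !mul0e mule0.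
Qed.

Definition subst_pvalue (t : nat) (x : R) (w : Omega) : nat -> R :=
  fun i => if i == t then x else X i w.

Lemma measurable_decisions (alpha lambda tau : history -> R) h e :
  measurable [set y : R | decisions alpha lambda tau y h = e].
Proof.
have le_eq c b : measurable [set y : R | (y <= c) = b].
  case: b.
    rewrite (_ : [set y | _] = `]-oo, c]%classic); first exact: measurable_itv.
    by apply/seteqP; split => y /=; rewrite in_itv.
  rewrite (_ : [set y | _] = `]c, +oo[%classic); first exact: measurable_itv.
  by apply/seteqP; split => y /=; rewrite in_itv /= andbT ltNge; [move=> ->|move/negbTE].
rewrite (_ : [set y | _] = [set y | (y <= alpha h) = e.1.1] `&`
  ([set y | (y <= lambda h) = e.1.2] `&` [set y | (y <= tau h) = e.2])).
  by apply: measurableI; [|apply: measurableI].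
apply/seteqP; split => y /=; rewrite /decisions; first by move=> <-.
by case: e => [[r c] s] /= [-> [-> ->]].
Qed.

Lemma hist_subst_cylinder (alpha lambda tau : history -> R) t x n H :
  (n <= T)%N -> size H = n ->
  exists B : nat -> set R, [/\ forall i, measurable (B i), B t = setT \/ B t = set0 &
    [set w | hist alpha lambda tau (subst_pvalue t x w) n = H] = cylinder B].
Proof.
elim: n H => [|n IHn] H le_nT.
  move/size0nil ->; exists (fun _ => setT); split => //; first by left.
  by apply/seteqP; split => w //= _; apply/cylinderP.
case/lastP: H => [//|H e]; rewrite size_rcons => -[/(IHn _ (ltnW le_nT))[B [mB Bt cylB]]].
pose D := if n == t then (if decisions alpha lambda tau x H == e then setT else set0)
  else [set y | decisions alpha lambda tau y H = e].
exists (fun i => if i == n then B n `&` D else B i); split.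
- move=> i; case: eqP => _ //; apply: measurableI => //; rewrite /D.
  by case: eqP => _; [case: eqP|exact: measurable_decisions].
- rewrite /=; case: ifP => [/eqP tn|_ //]; rewrite /D -tn eqxx.
  by case: eqP => _; case: Bt => ->; rewrite ?setIT ?setI0; auto.
rewrite cylinder_setI // -cylB; apply/seteqP; split => w /=.
  rewrite histS => /eqP; rewrite eqseq_rcons => /andP[/eqP hw /eqP ew]; split => //.
  by move: ew; rewrite hw /D /subst_pvalue; case: eqP => _ //; case: eqP.
move=> [hw]; rewrite histS hw /D /subst_pvalue.
by case: ifP => _; [case: eqP => [-> //|_ []] | move=> /= ->].
Qed.

End Cylinder.

Section PreimageBands.
Variables (d : measure_display) (Omega : measurableType d) (R : realType).
Variables (P : probability Omega R) (Y : Omega -> R).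
Hypothesis mY : measurable_fun setT Y.

Lemma preimage_itvNy_setU (b0 b1 : R) : b0 <= b1 ->
  Y @^-1` `]-oo, b1] = Y @^-1` `]-oo, b0] `|` Y @^-1` `]b0, b1].
Proof. by move=> le_b; rewrite -preimage_setU -itv_bndbnd_setU // bnd_simp. Qed.

Lemma disjoint_preimage_itvNy (D : set Omega) (b0 b1 : R) :
  [disjoint D `&` Y @^-1` `]-oo, b0] & D `&` Y @^-1` `]b0, b1]].
Proof.
apply/eqP/seteqP; split => w // [[_]]; rewrite /= !in_itv /= => le_Yb [_ /andP[lt_bY _]].
by move: (le_lt_trans le_Yb lt_bY); rewrite ltxx.
Qed.

Lemma measurable_preimage B : measurable B -> measurable (Y @^-1` B).
Proof. by move=> mB; rewrite -[Y @^-1` B]setTI; apply: mY. Qed.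

Lemma prob_preimage_itvNy_setU (b0 b1 : R) : b0 <= b1 ->
  fine (P (Y @^-1` `]-oo, b1])) =
  fine (P (Y @^-1` `]-oo, b0])) + fine (P (Y @^-1` `]b0, b1])).
Proof.
move=> le_b; have mYi (i : interval R) : measurable (Y @^-1` [set` i]).
  by apply: measurable_preimage; exact: measurable_itv.
rewrite -fineD ?fin_num_measure // (preimage_itvNy_setU le_b) measureU //.
by have /eqP := disjoint_preimage_itvNy setT b0 b1; rewrite !setTI.
Qed.

Lemma ge0_integral_preimage_itvNy_bands (D : set Omega) (f : Omega -> \bar R) (b0 b1 b2 : R) :
  measurable D -> b0 <= b1 -> b1 <= b2 ->
  measurable_fun (D `&` Y @^-1` `]-oo, b2]) f ->
  (forall w, (D `&` Y @^-1` `]-oo, b2]) w -> (0 <= f w)%E) ->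
  (\int[P]_(w in D `&` Y @^-1` `]-oo, b2]) f w =
   \int[P]_(w in D `&` Y @^-1` `]-oo, b0]) f w + \int[P]_(w in D `&` Y @^-1` `]b0, b1]) f w
   + \int[P]_(w in D `&` Y @^-1` `]b1, b2]) f w)%E.
Proof.
move=> mD le_b01 le_b12.
have mDY (i : interval R) : measurable (D `&` Y @^-1` [set` i]).
  by apply: measurableI => //; apply: measurable_preimage; exact: measurable_itv.
have m0 := mDY `]-oo, b0]; have m1 := mDY `]b0, b1]; have m2 := mDY `]b1, b2].
have m01 : measurable (D `&` Y @^-1` `]-oo, b0] `|` D `&` Y @^-1` `]b0, b1]).
  exact: measurableU.
have disj01 := disjoint_preimage_itvNy D b0 b1.
have disj012 : [disjoint D `&` Y @^-1` `]-oo, b0] `|` D `&` Y @^-1` `]b0, b1]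
  & D `&` Y @^-1` `]b1, b2]].
  by rewrite -setIUr -(preimage_itvNy_setU le_b01); exact: disjoint_preimage_itvNy.
rewrite (preimage_itvNy_setU le_b12) (preimage_itvNy_setU le_b01) !setIUr => mf f_ge0.
have mf01 : measurable_fun (D `&` Y @^-1` `]-oo, b0] `|` D `&` Y @^-1` `]b0, b1]) f.
  by apply: measurable_funS mf => //; exact: measurableU.
have f01_ge0 w : (D `&` Y @^-1` `]-oo, b0] `|` D `&` Y @^-1` `]b0, b1]) w -> (0 <= f w)%E.
  by move=> w01; apply: f_ge0; left.
by rewrite ge0_integral_setU ?ge0_integral_setU.
Qed.

End PreimageBands.

Section Substitution.
Variables (d : measure_display) (Omega : measurableType d) (R : realType).
Variables (P : probability Omega R) (X : nat -> Omega -> R).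
Variables (alpha lambda tau : history -> R) (T t : nat).
Hypotheses (mX : forall i, measurable_fun setT (X i)) (lt_tT : (t < T)%N).
Local Notation hist := (hist alpha lambda tau).
Local Notation subst := (subst_pvalue X t).
Local Notation E h := (hist_event alpha lambda tau X t h).

Definition subst_event (x : R) (H : history) : set Omega :=
  [set w | hist (subst x w) T = H].

Lemma measurable_subst_event x H : measurable (subst_event x H).
Proof.
rewrite /subst_event; have [size_H|size_H] := eqVneq (size H) T.
  have [B [mB _ ->]] := hist_subst_cylinder X alpha lambda tau t x (leqnn T) size_H.
  exact: measurable_cylinder.
rewrite (_ : [set w | _] = set0) //; apply/seteqP; split => w //= hw.
by move: size_H; rewrite -hw size_hist eqxx.
Qed.

Lemma subst_hist_sum (Phi : history -> R) x w :
  Phi (hist (subst x w) T) =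
  \sum_(H : T.-tuple (bool * bool * bool)) Phi H * \1_(subst_event x H) w.
Proof.
have size_hw : size (hist (subst x w) T) == T by rewrite size_hist.
rewrite (bigD1 (Tuple size_hw)) //= big1 => [|H neq_H].
  by rewrite addr0 indicE mem_set ?mulr1.
rewrite indicE memNset ?mulr0 // => /= hw; move: neq_H.
by rewrite (_ : H = Tuple size_hw) ?eqxx //; apply: val_inj; rewrite /= hw.
Qed.

Lemma measurable_fun_subst_hist (Phi : history -> R) x D :
  measurable_fun D (fun w => Phi (hist (subst x w) T)).
Proof.
rewrite (_ : (fun w => _) = fun w => \sum_(H : T.-tuple _) Phi H * \1_(subst_event x H) w).
  apply: measurable_sum => H; apply: measurable_funM => //.
  exact/measurable_indic/measurable_subst_event.
by apply/funext => w; apply: subst_hist_sum.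
Qed.

Lemma integral_subst_hist (Phi : history -> R) x D :
  measurable D -> (forall H, 0 <= Phi H) ->
  (\int[P]_(w in D) (Phi (hist (subst x w) T))%:E =
   \sum_(H : T.-tuple (bool * bool * bool)) (Phi H)%:E * P (subst_event x H `&` D))%E.
Proof.
move=> mD Phi_ge0.
under eq_integral => w _ do rewrite subst_hist_sum -sumEFin.
rewrite ge0_integral_sum //; first last.
- by move=> H w _; rewrite lee_fin mulr_ge0.
- move=> H; apply/measurable_EFinP/measurable_funM => //.
  exact/measurable_indic/measurable_subst_event.
apply: eq_bigr => H _; under eq_integral => w _ do rewrite EFinM.
rewrite ge0_integralZl_EFin //=.
  by rewrite integral_indic //; apply: measurable_subst_event.
exact/measurable_EFinP/measurable_indic/measurable_subst_event.
Qed.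

Lemma hist_subst_t x w : hist (fun i => X i w) t = hist (subst x w) t.
Proof. by apply: eq_hist => i lt_it; rewrite /subst_pvalue ltn_eqF. Qed.

Lemma hist_event_cylinder h : size h = t ->
  exists B : nat -> set R, [/\ forall i, measurable (B i), B t = setT \/ B t = set0 &
    E h = cylinder X T B].
Proof.
move=> size_h.
have [B [mB Bt cylB]] := hist_subst_cylinder X alpha lambda tau t 0 (ltnW lt_tT) size_h.
exists B; split => //; rewrite -cylB /hist_event; apply/seteqP; split => w /=;
  by rewrite (hist_subst_t 0).
Qed.

Lemma measurable_hist_event h : size h = t -> measurable (E h).
Proof.
by move/hist_event_cylinder => [B [mB _ ->]]; apply: measurable_cylinder.
Qed.

Hypothesis indepX : mutually_independent P X.

Lemma prob_hist_event_indep h B : size h = t -> measurable B ->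
  P (E h `&` X t @^-1` B) = (P (X t @^-1` B) * P (E h))%E.
Proof.
move/hist_event_cylinder => [C [mC Ct ->]] mB.
exact: prob_preimage_setI_cylinder.
Qed.

Lemma integral_subst_hist_indep (Phi : history -> R) x h B :
  size h = t -> measurable B -> (forall H, 0 <= Phi H) ->
  (\int[P]_(w in E h `&` X t @^-1` B) (Phi (hist (subst x w) T))%:E =
   P (X t @^-1` B) * \int[P]_(w in E h) (Phi (hist (subst x w) T))%:E)%E.
Proof.
move=> size_h mB Phi_ge0.
have mE := measurable_hist_event size_h.
have mXB := measurable_preimage (mX t) mB.
rewrite !integral_subst_hist //; last exact: measurableI.
rewrite ge0_sume_distrr => [|H _]; last by rewrite mule_ge0 ?lee_fin ?measure_ge0.
apply: eq_bigr => H _; rewrite muleCA setIA; congr (_ * _)%E.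
have E_subst w : subst_event x H w -> E h w <-> take t H = h.
  rewrite /hist_event /= => hw.
  by rewrite (hist_subst_t x) -(take_hist _ _ _ _ (ltnW lt_tT)) hw.
have [tH|tH] := eqVneq (take t H) h.
  have -> : subst_event x H `&` E h = subst_event x H.
    by apply/setIidl => w hw; apply/E_subst.
  have [C [mC Ct cylC]] := hist_subst_cylinder X alpha lambda tau t x (leqnn T) (size_tuple H).
  rewrite /subst_event cylC.
  exact: prob_preimage_setI_cylinder.
have -> : subst_event x H `&` E h = set0.
  by apply/seteqP; split => w // [/E_subst hw /hw]; apply/eqP.
by rewrite set0I measure0 mule0.
Qed.

End Substitution.

Section RealInequalities.
Variable R : realFieldType.

Lemma max1_gt0 (r : R) : 0 < Num.max r 1.
Proof. by rewrite lt_max ltr01 orbT. Qed.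

Lemma ler_of_lt1_mulr (c y z : R) : 0 <= c < 1 -> 0 <= y ->
  (forall s, c < s < 1 -> s * y <= z) -> y <= z.
Proof.
move=> /andP[c_ge0 c_lt1] y_ge0 le_sz; rewrite leNgt; apply/negP => lt_zy.
have z_ge0 : 0 <= z.
  have half_in : c < (c + 1) / 2 < 1 by apply/andP; split; lra.
  by apply: le_trans (le_sz _ half_in); rewrite mulr_ge0 //; lra.
have y_gt0 := le_lt_trans z_ge0 lt_zy.
set m := Num.max c (z / y).
have m_lt1 : m < 1 by rewrite gt_max c_lt1 ltr_pdivrMr // mul1r.
have le_cm : c <= m by rewrite le_max lexx.
have le_zm : z / y <= m by rewrite le_max lexx orbT.
have s_in : c < (m + 1) / 2 < 1 by apply/andP; split; lra.
by have := le_sz _ s_in; rewrite -ler_pdivlMr //; lra.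
Qed.

Lemma cdf_ratio_le (f : R -> R) :
  {homo f : x y / x <= y} -> (forall x, 0 <= f x <= 1) ->
  (forall x s, 0 < x < 1 -> 0 < s < 1 -> 0 < f s -> f (x * s) <= x * f s) ->
  forall c u, 0 <= c <= u -> 0 < u <= 1 -> u * f c <= c * f u.
Proof.
move=> f_mono f01 f_cons c u /andP[c_ge0 le_cu] /andP[u_gt0 u_le1].
have f_ge0 x : 0 <= f x by case/andP: (f01 x).
have interior c' s : 0 < c' < s -> s < 1 -> s * f c' <= c' * f s.
  move=> /andP[c'_gt0 lt_c's] s_lt1; have s_gt0 := lt_trans c'_gt0 lt_c's.
  have [fs_gt0|fs_le0] := ltP 0 (f s); last first.
    have -> : f c' = 0.
      by apply/eqP; rewrite eq_le f_ge0 andbT (le_trans (f_mono _ _ (ltW lt_c's)) fs_le0).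
    by rewrite mulr0 mulr_ge0 // ltW.
  have x01 : 0 < c' / s < 1 by rewrite divr_gt0 //= ltr_pdivrMr // mul1r.
  have s01 : 0 < s < 1 by rewrite s_gt0.
  have := f_cons _ _ x01 s01 fs_gt0; rewrite mulfVK ?gt_eqF // => le_fc'.
  by rewrite mulrC -ler_pdivlMr // mulrAC.
have [<-|neq_cu] := eqVneq c u; first by rewrite mulrC.
have [c0|c_neq0] := eqVneq c 0.
  (* [f 0 <= f (x / 2) <= x] for every [x] in (0, 1), so [f 0 = 0]. *)
  rewrite c0 mul0r pmulr_rle0 // leNgt; apply/negP => f0_gt0.
  have f0_le1 : f 0 <= 1 by case/andP: (f01 0).
  have f0_half_in : 0 < f 0 / 2 < 1 by apply/andP; split; lra.
  have half_in : 0 < (2^-1 : R) < 1 by apply/andP; split; lra.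
  have le_f0 : f 0 <= f (f 0 / 2 * 2^-1) by apply: f_mono; lra.
  have [fh_gt0|fh_le0] := ltP 0 (f 2^-1).
    have := f_cons _ _ f0_half_in half_in fh_gt0; case/andP: (f01 2^-1) => _ fh_le1.
    nra.
  have le_half : f 0 / 2 * 2^-1 <= 2^-1 by lra.
  by have := f_mono _ _ le_half; lra.
have c_gt0 : 0 < c by rewrite lt_neqAle eq_sym c_neq0.
have lt_cu : c < u by rewrite lt_neqAle neq_cu.
have [u_lt1|u_ge1] := ltP u 1; first by apply: interior; rewrite ?c_gt0.
have -> : u = 1 by apply/eqP; rewrite eq_le u_le1 u_ge1.
(* The hypothesis excludes [s = 1]: let [s] tend to [1] instead. *)
rewrite mul1r; apply: (@ler_of_lt1_mulr c) => [|//|s /andP[lt_cs s_lt1]].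
  by rewrite c_ge0 (lt_le_trans lt_cu u_le1).
apply: le_trans (interior c s _ s_lt1) _; first by rewrite c_gt0.
by rewrite ler_wpM2l // f_mono // ltW.
Qed.

Lemma mixture_le_top_band (a l u qR qC qN v0 vl vu : R) :
  0 <= a -> 0 <= l < u -> 0 <= qR -> 0 <= qC -> 0 <= qN ->
  0 <= v0 <= vl -> vl <= vu ->
  u * (qR + qC) <= l * (qR + qC + qN) ->
  a / u * (qR * v0 + qC * vl + qN * vu) <= a / (u - l) * (qN * vu).
Proof.
move=> a_ge0 /andP[l_ge0 lt_lu] qR_ge0 qC_ge0 qN_ge0 /andP[v0_ge0 le_v0l] le_vlu le_bands.
have u_gt0 : 0 < u by apply: le_lt_trans lt_lu.
have ul_gt0 : 0 < u - l by rewrite subr_gt0.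
set S := qR + qC + qN.
have le_mix : qR * v0 + qC * vl + qN * vu <= S * vu.
  have := ler_wpM2l qR_ge0 (le_trans le_v0l le_vlu); have := ler_wpM2l qC_ge0 le_vlu.
  rewrite /S; lra.
have le_ratio : S / u <= qN / (u - l).
  by rewrite ler_pdivrMr // mulrAC ler_pdivlMr //; rewrite /S; nra.
apply: le_trans (ler_wpM2l (divr_ge0 a_ge0 (ltW u_gt0)) le_mix) _.
rewrite !mulrA; apply: ler_wpM2r; first exact: le_trans (le_trans v0_ge0 le_v0l) le_vlu.
by rewrite -!mulrA ler_wpM2l // mulrC [_ * qN]mulrC.
Qed.

Lemma bottom_band_le_mixture (a u qR qC qN v0 vl vu : R) :
  0 <= a -> 0 < u -> 0 <= qC -> 0 <= qN -> 0 <= v0 <= vl -> vl <= vu ->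
  u * qR <= a * (qR + qC + qN) ->
  qR * v0 <= a / u * (qR * v0 + qC * vl + qN * vu).
Proof.
move=> a_ge0 u_gt0 qC_ge0 qN_ge0 /andP[v0_ge0 le_v0l] le_vlu le_bottom.
set S := qR + qC + qN.
have le_mix : S * v0 <= qR * v0 + qC * vl + qN * vu.
  have := ler_wpM2l qN_ge0 (le_trans le_v0l le_vlu); have := ler_wpM2l qC_ge0 le_v0l.
  rewrite /S; lra.
apply: le_trans (ler_wpM2l (divr_ge0 a_ge0 (ltW u_gt0)) le_mix).
rewrite mulrA; apply: ler_wpM2r => //.
by rewrite mulrAC ler_pdivlMr // mulrC.
Qed.

End RealInequalities.

Lemma size_hist_event_prob_gt0 d (Omega : measurableType d) (R : realType)
    (P : probability Omega R) (X : nat -> Omega -> R) (alpha lambda tau : history -> R)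
    (t : nat) (h : history) (S : set Omega) :
  (0 < P (hist_event alpha lambda tau X t h `&` S))%E -> size h = t.
Proof.
have [//|size_ne] := eqVneq (size h) t.
rewrite (_ : _ `&` S = set0) ?measure0 ?ltxx //.
by apply/seteqP; split => w // [/= hw _]; move: size_ne; rewrite -hw size_hist eqxx.
Qed.

Lemma measurable_fun_hist d (Omega : measurableType d) (R : realType)
    (X : nat -> Omega -> R) (alpha lambda tau : history -> R) (T : nat)
    (Phi : history -> R) (D : set Omega) :
  (forall i, measurable_fun setT (X i)) ->
  measurable_fun D (fun w => Phi (hist alpha lambda tau (fun i => X i w) T)).
Proof.
move=> mX; rewrite (_ : (fun w => _) =
  fun w => Phi (hist alpha lambda tau (subst_pvalue X T 0 w) T)).
  exact: measurable_fun_subst_hist.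
by apply/funext => w; congr Phi; apply: eq_hist => i lt_iT; rewrite /subst_pvalue ltn_eqF.
Qed.

Section Atom.
Variables (d : measure_display) (Omega : measurableType d) (R : realType).
Variables (P : probability Omega R) (X : nat -> Omega -> R).
Variables (alpha lambda tau : history -> R) (T t : nat) (g : {ffun 'I_T -> bool} -> R).
Hypotheses (mX : forall i, measurable_fun setT (X i)) (indepX : mutually_independent P X)
  (lt_tT : (t < T)%N).
Variable h : history.
Hypotheses (size_h : size h = t) (alpha_ge0 : 0 <= alpha h)
  (le_alpha_lambda : alpha h <= lambda h) (lt_lambda_tau : lambda h < tau h).

Local Notation hist := (hist alpha lambda tau).
Local Notation subst := (subst_pvalue X t).
Local Notation E := (hist_event alpha lambda tau X t h).
Local Notation gmax w := (Num.max (g (Rvec alpha lambda tau (fun i => X i w) T)) 1).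
Local Notation q B := (fine (P (X t @^-1` B))).
Local Notation A := (E `&` [set w | (X t w <= tau (hist (fun i => X i w) t))%R]).

Definition inv_gmax (H : history) : R :=
  (Num.max (g [ffun i : 'I_T => (nth (false, false, false) H i).1.1]) 1)^-1.

Lemma inv_gmax_ge0 H : 0 <= inv_gmax H.
Proof. by rewrite invr_ge0 ltW ?max1_gt0. Qed.

Lemma inv_gmax_hist w : (gmax w)^-1 = inv_gmax (hist (fun i => X i w) T).
Proof. by rewrite /inv_gmax -Rvec_hist. Qed.

Lemma inv_gmax_subst x w : E w ->
  decisions alpha lambda tau (X t w) h = decisions alpha lambda tau x h ->
  (gmax w)^-1 = inv_gmax (hist (subst x w) T).
Proof.
move=> Ew eq_dec; rewrite inv_gmax_hist; congr inv_gmax.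
apply: (@eq_hist_decisions _ _ _ _ _ _ t) => [i /negbTE|]; rewrite /subst_pvalue ?eqxx.
  by move->.
by rewrite (Ew : hist _ t = h).
Qed.

Definition subst_weight (x : R) : R :=
  fine (\int[P]_(w in E) (inv_gmax (hist (subst x w) T))%:E).

Let mE : measurable E := measurable_hist_event alpha lambda tau mX lt_tT size_h.
Let l_ge0 : 0 <= lambda h := le_trans alpha_ge0 le_alpha_lambda.
Let le_lu : lambda h <= tau h := ltW lt_lambda_tau.
Let q_ge0 B : 0 <= q B := fine_ge0 (measure_ge0 P _).

Lemma integral_inv_gmax_fin_num x :
  (\int[P]_(w in E) (inv_gmax (hist (subst x w) T))%:E)%E \is a fin_num.
Proof.
rewrite ge0_fin_numE; last by apply: integral_ge0 => w _; rewrite lee_fin inv_gmax_ge0.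
apply: (@le_lt_trans _ _ (\int[P]_(w in E) (cst 1 w))%E).
  apply: ge0_le_integral => //.
  - by move=> w _; rewrite lee_fin inv_gmax_ge0.
  - exact/measurable_EFinP/measurable_fun_subst_hist.
  - by move=> w _; rewrite /= lee_fin invf_le1 ?max1_gt0 // le_max lexx orbT.
by rewrite integral_cst // mul1e (le_lt_trans (probability_le1 _ mE)) ?ltry.
Qed.

Lemma subst_weight_ge0 x : 0 <= subst_weight x.
Proof. by apply/fine_ge0/integral_ge0 => w _; rewrite lee_fin inv_gmax_ge0. Qed.

Lemma integral_band x B c (F : Omega -> R) : measurable B -> 0 <= c ->
  (forall w, E w -> B (X t w) ->
    decisions alpha lambda tau (X t w) h = decisions alpha lambda tau x h /\
    F w = c / gmax w) ->
  (\int[P]_(w in E `&` X t @^-1` B) (F w)%:E = (c * (q B * subst_weight x))%:E)%E.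
Proof.
move=> mB c_ge0 band.
rewrite (eq_integral (fun w => c%:E * (inv_gmax (hist (subst x w) T))%:E)%E); last first.
  move=> w; rewrite inE => -[Ew XBw]; have [dec_x ->] := band w Ew XBw.
  by rewrite (inv_gmax_subst Ew dec_x) EFinM.
rewrite ge0_integralZl_EFin //; first last.
- exact/measurable_EFinP/measurable_fun_subst_hist.
- by move=> w _; rewrite lee_fin inv_gmax_ge0.
- by apply: measurableI => //; apply: measurable_preimage.
rewrite integral_subst_hist_indep //; last exact: inv_gmax_ge0.
rewrite -(fineK (integral_inv_gmax_fin_num x)).
by rewrite -(fineK (fin_num_measure P _ (measurable_preimage (mX t) mB))) -!EFinM.
Qed.

Lemma decisions_low_band y : y <= alpha h ->
  decisions alpha lambda tau y h = decisions alpha lambda tau 0 h.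
Proof.
move=> le_ya; have le_au := le_trans le_alpha_lambda le_lu.
rewrite /decisions le_ya (le_trans le_ya le_alpha_lambda) (le_trans le_ya le_au).
by rewrite alpha_ge0 l_ge0 (le_trans alpha_ge0 le_au).
Qed.

Lemma decisions_mid_band y : alpha h < y <= lambda h ->
  decisions alpha lambda tau y h = decisions alpha lambda tau (lambda h) h.
Proof.
move=> /andP[lt_ay le_yl].
rewrite /decisions (lt_geF lt_ay) le_yl (le_trans le_yl le_lu).
by rewrite (lt_geF (lt_le_trans lt_ay le_yl)) lexx le_lu.
Qed.

Lemma decisions_top_band y : lambda h < y <= tau h ->
  decisions alpha lambda tau y h = decisions alpha lambda tau (tau h) h.
Proof.
move=> /andP[lt_ly le_yu]; have lt_au := le_lt_trans le_alpha_lambda lt_lambda_tau.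
rewrite /decisions (lt_geF (le_lt_trans le_alpha_lambda lt_ly)) (lt_geF lt_ly) le_yu.
by rewrite (lt_geF lt_au) (lt_geF lt_lambda_tau) lexx.
Qed.

Lemma atom_set_itv : A = E `&` X t @^-1` `]-oo, tau h].
Proof.
by apply/seteqP; split => w [Ew]; rewrite /= in_itv /= (Ew : hist _ t = h).
Qed.

Lemma integral_atom_bands (F : Omega -> R) cR cC cN :
  0 <= cR -> 0 <= cC -> 0 <= cN ->
  (forall w, E w -> X t w <= alpha h -> F w = cR / gmax w) ->
  (forall w, E w -> alpha h < X t w <= lambda h -> F w = cC / gmax w) ->
  (forall w, E w -> lambda h < X t w <= tau h -> F w = cN / gmax w) ->
  (\int[P]_(w in A) (F w)%:E =
   (cR * (q `]-oo, alpha h] * subst_weight 0)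
    + cC * (q `]alpha h, lambda h] * subst_weight (lambda h))
    + cN * (q `]lambda h, tau h] * subst_weight (tau h)))%:E)%E.
Proof.
move=> cR_ge0 cC_ge0 cN_ge0 FR FC FN; rewrite atom_set_itv.
pose c y := if y <= alpha h then cR else if y <= lambda h then cC else cN.
have F_band w : (E `&` X t @^-1` `]-oo, tau h]) w -> F w = c (X t w) / gmax w.
  move=> [Ew]; rewrite /= in_itv /= /c => le_Xu.
  case: ifPn => [|]; first exact: FR.
  rewrite -ltNge => lt_aX; case: ifPn => [le_Xl|]; first by apply: FC; rewrite ?lt_aX.
  by rewrite -ltNge => lt_lX; apply: FN; rewrite ?lt_lX.
have mF : measurable_fun (E `&` X t @^-1` `]-oo, tau h]) (fun w => (F w)%:E).
  apply/measurable_EFinP.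
  apply: (eq_measurable_fun (fun w => c (X t w) * inv_gmax (hist (fun i => X i w) T))).
    by move=> w /set_mem Aw; rewrite F_band // inv_gmax_hist.
  apply: measurable_funM; last exact: measurable_fun_hist.
  apply: (measurable_funS measurableT) => //; rewrite /c.
  apply: measurable_fun_ifT; [exact: measurable_fun_ler|exact: measurable_cst|].
  apply: measurable_fun_ifT; [exact: measurable_fun_ler|exact: measurable_cst..].
have F_ge0 w : (E `&` X t @^-1` `]-oo, tau h]) w -> (0 <= (F w)%:E)%E.
  move=> Aw; rewrite lee_fin (F_band w Aw) divr_ge0 ?(ltW (max1_gt0 _)) //.
  by rewrite /c; case: ifP => _ //; case: ifP.
rewrite (ge0_integral_preimage_itvNy_bands P (mX t) mE le_alpha_lambda le_lu) //.
rewrite (@integral_band 0 _ cR F (measurable_itv _) cR_ge0); last first.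
  by move=> w Ew; rewrite /= in_itv /= => XR; rewrite decisions_low_band // FR.
rewrite (@integral_band (lambda h) _ cC F (measurable_itv _) cC_ge0); last first.
  by move=> w Ew; rewrite /= in_itv /= => XC; rewrite decisions_mid_band // FC.
rewrite (@integral_band (tau h) _ cN F (measurable_itv _) cN_ge0) //.
by move=> w Ew; rewrite /= in_itv /= => XN; rewrite decisions_top_band // FN.
Qed.

Hypotheses (mono_g : coord_nondecr g) (mono_alpha : monotone_past alpha)
  (mono_lambda : monotone_past lambda) (mono_tau : monotone_past (fun h => 1 - tau h)).

Lemma subst_weight_le x y : x <= y -> y <= tau h -> subst_weight x <= subst_weight y.
Proof.
move=> le_xy le_yu; apply: fine_le; rewrite ?integral_inv_gmax_fin_num //.
apply: ge0_le_integral => //.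
- by move=> w _; rewrite lee_fin inv_gmax_ge0.
- exact/measurable_EFinP/measurable_fun_subst_hist.
- exact/measurable_EFinP/measurable_fun_subst_hist.
move=> w Ew; rewrite lee_fin /inv_gmax -!Rvec_hist.
rewrite lef_pV2 ?posrE ?max1_gt0 // le_max2 // mono_g //.
apply: (@Rvec_le_lower_pvalue _ _ _ _ mono_alpha mono_lambda mono_tau _ _ t).
- by move=> i /negbTE ne_it; rewrite /subst_pvalue ne_it.
- by rewrite /subst_pvalue eqxx.
by rewrite -(hist_subst_t X alpha lambda tau t y w) (Ew : hist _ t = h) /subst_pvalue eqxx.
Qed.

Hypotheses (tau_le1 : tau h <= 1) (cons : cond_unif_conservative P alpha lambda tau X t).
Hypothesis PA_gt0 : (0 < P A)%E.

Lemma prob_hist_event_gt0 : (0 < P E)%E.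
Proof.
apply: (lt_le_trans PA_gt0); rewrite atom_set_itv; apply: le_measure; rewrite ?inE //.
by apply: measurableI => //; apply: measurable_preimage; [exact: mX|exact: measurable_itv].
Qed.

Lemma prob_atom_cdf c :
  P (E `&` X t @^-1` `]-oo, c]) = (q `]-oo, c] * fine (P E))%:E.
Proof.
have mXc : measurable (X t @^-1` `]-oo, c]).
  by apply: measurable_preimage; [exact: mX|exact: measurable_itv].
rewrite (prob_hist_event_indep alpha lambda tau lt_tT indepX) //.
by rewrite EFinM !fineK ?fin_num_measure.
Qed.

Lemma pvalue_cdf_conservative x s : 0 < x < 1 -> 0 < s < 1 -> 0 < q `]-oo, s] ->
  q `]-oo, x * s] <= x * q `]-oo, s].
Proof.
move=> x_in s_in qs_gt0; have /andP[s_gt0 _] := s_in.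
have pE_gt0 : 0 < fine (P E).
  by rewrite fine_gt0 // prob_hist_event_gt0 (le_lt_trans (probability_le1 _ mE)) ?ltry.
have := @cons x s x_in s_in h; rewrite /= /cprob.
rewrite (_ : E `&` [set w | X t w <= s] = E `&` X t @^-1` `]-oo, s]); last first.
  by apply/seteqP; split => w [Ew]; rewrite /= in_itv.
rewrite (_ : E `&` X t @^-1` `]-oo, s] `&` [set w | X t w / s <= x] =
  E `&` X t @^-1` `]-oo, x * s]); last first.
  apply/seteqP; split => w; rewrite /= !in_itv /=.
    by move=> [[Ew _]]; rewrite ler_pdivrMr.
  move=> [Ew le_Xxs]; split; [split=> //|by rewrite ler_pdivrMr].
  by apply: le_trans le_Xxs _; rewrite ler_piMl ?(ltW s_gt0) //; case/andP: x_in => _ /ltW.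
rewrite !prob_atom_cdf /= -EFinM lee_fin lte_fin mulr_gt0 // => /(_ isT).
by rewrite invfM mulrACA divff ?gt_eqF // mulr1 ler_pdivrMr // mulrC.
Qed.

Lemma pvalue_cdf_ratio c : 0 <= c <= tau h ->
  tau h * q `]-oo, c] <= c * q `]-oo, tau h].
Proof.
have mXc c' : measurable (X t @^-1` `]-oo, c']).
  by apply: measurable_preimage; [exact: mX|exact: measurable_itv].
move=> c_in; apply: (@cdf_ratio_le _ (fun c => q `]-oo, c])); rewrite ?c_in ?tau_le1 ?andbT //.
- move=> y z le_yz; apply: fine_le; rewrite ?fin_num_measure //.
  by apply: le_measure; rewrite ?inE // => w; rewrite /= !in_itv /= => /le_trans; apply.
- move=> y; rewrite q_ge0 /= -[1]/(fine 1%E).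
  by apply: fine_le; rewrite ?fin_num_measure ?probability_le1.
- exact: pvalue_cdf_conservative.
- exact: le_lt_trans alpha_ge0 (le_lt_trans le_alpha_lambda lt_lambda_tau).
Qed.

Lemma alpha_over_tau_le_ratio :
  alpha h / tau h * (q `]-oo, alpha h] * subst_weight 0
    + q `]alpha h, lambda h] * subst_weight (lambda h)
    + q `]lambda h, tau h] * subst_weight (tau h)) <=
  alpha h / (tau h - lambda h) * (q `]lambda h, tau h] * subst_weight (tau h)).
Proof.
apply: mixture_le_top_band; rewrite ?l_ge0 ?q_ge0 //.
- by rewrite subst_weight_ge0 subst_weight_le.
- exact: subst_weight_le.
rewrite -(prob_preimage_itvNy_setU P (mX t) le_alpha_lambda).
rewrite -(prob_preimage_itvNy_setU P (mX t) le_lu).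
by apply: pvalue_cdf_ratio; rewrite l_ge0.
Qed.

Lemma rejection_le_alpha_over_tau :
  q `]-oo, alpha h] * subst_weight 0 <=
  alpha h / tau h * (q `]-oo, alpha h] * subst_weight 0
    + q `]alpha h, lambda h] * subst_weight (lambda h)
    + q `]lambda h, tau h] * subst_weight (tau h)).
Proof.
apply: bottom_band_le_mixture; rewrite ?q_ge0 //.
- exact: le_lt_trans l_ge0 lt_lambda_tau.
- by rewrite subst_weight_ge0 subst_weight_le.
- exact: subst_weight_le.
rewrite -(prob_preimage_itvNy_setU P (mX t) le_alpha_lambda).
rewrite -(prob_preimage_itvNy_setU P (mX t) le_lu).
by apply: pvalue_cdf_ratio; rewrite alpha_ge0 (le_trans le_alpha_lambda).
Qed.

Lemma integral_rejection_ratio :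
  (\int[P]_(w in A) (alpha (hist (fun i => X i w) t) *
      ((lambda (hist (fun i => X i w) t) < X t w <= tau (hist (fun i => X i w) t))%R : bool)%:R
      / ((tau (hist (fun i => X i w) t) - lambda (hist (fun i => X i w) t)) * gmax w))%:E =
   (alpha h / (tau h - lambda h) * (q `]lambda h, tau h] * subst_weight (tau h)))%:E)%E.
Proof.
rewrite (@integral_atom_bands _ 0 0 (alpha h / (tau h - lambda h))) ?lexx //; last 3 first.
- move=> w Ew le_Xa; rewrite (Ew : hist _ t = h).
  by rewrite (le_gtF (le_trans le_Xa le_alpha_lambda)) mulr0 !mul0r.
- by move=> w Ew /andP[_ le_Xl]; rewrite (Ew : hist _ t = h) (le_gtF le_Xl) mulr0 !mul0r.
- move=> w Ew /andP[lt_lX le_Xu]; rewrite (Ew : hist _ t = h) lt_lX le_Xu mulr1.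
  by rewrite invfM mulrA.
- by rewrite !mul0r !add0r.
- by rewrite divr_ge0 // subr_ge0.
Qed.

Lemma integral_alpha_over_tau :
  (\int[P]_(w in A)
      (alpha (hist (fun i => X i w) t) / (tau (hist (fun i => X i w) t) * gmax w))%:E =
   (alpha h / tau h * (q `]-oo, alpha h] * subst_weight 0
    + q `]alpha h, lambda h] * subst_weight (lambda h)
    + q `]lambda h, tau h] * subst_weight (tau h)))%:E)%E.
Proof.
have au_ge0 : 0 <= alpha h / tau h by rewrite divr_ge0 // (le_trans l_ge0).
rewrite (@integral_atom_bands _ (alpha h / tau h) (alpha h / tau h) (alpha h / tau h)) //.
- by rewrite -!mulrDr.
all: by move=> w Ew _; rewrite (Ew : hist _ t = h) invfM mulrA.
Qed.

Lemma integral_rejection :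
  (\int[P]_(w in A) (((X t w <= alpha (hist (fun i => X i w) t))%R : bool)%:R / gmax w)%:E =
   (q `]-oo, alpha h] * subst_weight 0)%:E)%E.
Proof.
rewrite (@integral_atom_bands _ 1 0 0) ?ler01 ?lexx //; last 3 first.
- by move=> w Ew le_Xa; rewrite (Ew : hist _ t = h) le_Xa.
- by move=> w Ew /andP[lt_aX _]; rewrite (Ew : hist _ t = h) (lt_geF lt_aX) mul0r.
- move=> w Ew /andP[lt_lX _]; rewrite (Ew : hist _ t = h).
  by rewrite (lt_geF (le_lt_trans le_alpha_lambda lt_lX)) mul0r.
by rewrite !mul0r !addr0 mul1r.
Qed.

End Atom.

Theorem lemma2 (d : measure_display) (Omega : measurableType d) (R : realType)
  (P : probability Omega R) (X : nat -> Omega -> R)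
  (H0 : set nat)
  (alpha lambda tau : history -> R)
  (T : nat) (g : {ffun 'I_T -> bool} -> R)
  (t : nat) :
  (forall i, measurable_fun setT (X i)) ->
  (forall i w, 0 <= X i w <= 1) ->
  mutually_independent P X ->
  coord_nondecr g ->
  (forall h, 0 <= alpha h <= 1) ->
  (forall h, 0 <= lambda h <= 1) ->
  (forall h, 0 <= tau h <= 1) ->
  monotone_past alpha ->
  monotone_past lambda ->
  monotone_past (fun h => 1 - tau h) ->
  (forall h, alpha h <= lambda h < tau h) ->
  (t < T)%N -> t \in H0 ->
  cond_unif_conservative P alpha lambda tau X t ->
  let p w := fun i => X i w in
  let al w := alpha (hist alpha lambda tau (p w) t) in
  let la w := lambda (hist alpha lambda tau (p w) t) in
  let ta w := tau (hist alpha lambda tau (p w) t) in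
  let G w := Num.max (g (Rvec alpha lambda tau (p w) T)) 1 in
  forall h : history,
    let A := hist_event alpha lambda tau X t h `&` [set w | X t w <= ta w] in
    (0 < P A)%E ->
    (cexp P A (fun w => (al w * ((la w < X t w <= ta w)%R : bool)%:R / ((ta w - la w) * G w))%R)
      >= cexp P A (fun w => (al w / (ta w * G w))%R))%E /\
    (cexp P A (fun w => (al w / (ta w * G w))%R)
      >= cexp P A (fun w => (((X t w <= al w)%R : bool)%:R / G w)%R))%E.
Proof.
(* The range of the p-values, the bounds on [lambda] and [t \in H0] are not needed:
   the null enters only through conditional uniform conservativeness. *)
move=> mX _ indepX mono_g alpha01 _ tau01 mono_alpha mono_lambda mono_tau alpha_lambda_tau
  lt_tT _ cons p al la ta G h A PA_gt0.
have size_h := size_hist_event_prob_gt0 PA_gt0.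
have /andP[alpha_ge0 _] := alpha01 h; have /andP[_ tau_le1] := tau01 h.
have /andP[le_al lt_lu] := alpha_lambda_tau h.
have PA_inv_ge0 : 0 <= (fine (P A))^-1 by rewrite invr_ge0 fine_ge0 ?measure_ge0.
rewrite /cexp /al /la /ta /G /p.
rewrite integral_rejection_ratio ?integral_alpha_over_tau ?integral_rejection //.
rewrite -!EFinM !lee_fin; split; apply: ler_wpM2r => //.
- exact: alpha_over_tau_le_ratio.
- exact: rejection_le_alpha_over_tau.
Qed.
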